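(* With three agents, items $\mathcal{M}=\{(j,k): j\in\{1,2,3\},k\in\{1,2,3,4\}\}$ and the matrices $$B=\begin{pmatrix}1&1&1&1\\1&1&1&1\\1&1&1&1\end{pmatrix},\ O=\begin{pmatrix}17&25&12&1\\2&22&3&28\\11&0&21&23\end{pmatrix},\ E^1=\begin{pmatrix}-3&1&1&1\\0&0&0&0\\0&0&0&0\end{pmatrix},$$ $$E^2=\begin{pmatrix}-3&1&0&0\\1&0&0&0\\1&0&0&0\end{pmatrix},\ E^3=\begin{pmatrix}-3&0&1&0\\0&0&1&0\\0&0&0&1\end{pmatrix},$$ define additive utilities $u_i((j,k))=10^6B_{jk}+10^3O_{jk}+E^i_{jk}$ and $w_i((j,k))=10^6B_{jk}+10^3O_{jk}-E^i_{jk}$ for $i\in[3]$. Let $I=(\mathcal{M},[3],(u_i))$ and $J=(\mathcal{M},[3],(w_i))$. Then: there is an MmS allocation for $I$ but no MmS allocation for $-I=(\mathcal{M},[3],(-u_i))$; and there is no MmS allocation for $J$ but there is an MmS allocation for $-J=(\mathcal{M},[3],(-w_i))$.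
   Context: $\Pi_N(\mathcal{M})$ is the set of ordered $N$-partitions of $\mathcal{M}$ (parts may be empty). For an additive function $v$, $MmS_{v}^N(\mathcal{M}):=\max_{(S_1,\ldots,S_N)\in\Pi_N(\mathcal{M})}\min_{j} v(S_j)$. An MmS allocation for an instance $(\mathcal{M},[N],(v_i))$ is an allocation $(S_1,\dots,S_N)\in\Pi_N(\mathcal{M})$ with $v_i(S_i)\ge MmS_{v_i}^N(\mathcal{M})$ for all $i$. *)

From HB Require Import structures.
From mathcomp Require Import all_boot all_order all_algebra.
Set Implicit Arguments. Unset Strict Implicit. Unset Printing Implicit Defensive.
Import Order.TTheory GRing.Theory Num.Theory.
Local Open Scope ring_scope.

Section MmS.
Variables (M : finType) (N : nat).
(* Agents are 'I_N.+1, i.e. N.+1 >= 1 agents. *)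

Definition addv (v : M -> int) (S : {set M}) : int := \sum_(x in S) v x.

(* ordered (N.+1)-partitions of M (parts may be empty) *)
Definition is_partition (P : {ffun 'I_N.+1 -> {set M}}) : bool :=
  [forall i, forall j, (i != j) ==> [disjoint P i & P j]] &&
  (\bigcup_(j < N.+1) P j == setT).

Definition trivial_partition : {ffun 'I_N.+1 -> {set M}} :=
  [ffun j => if j == ord0 then setT else set0].

(* min_j v(S_j); the seed v(P ord0) is itself one of the terms *)
Definition minpart (v : M -> int) (P : {ffun 'I_N.+1 -> {set M}}) : int :=
  \big[Num.min/ addv v (P ord0)]_(j < N.+1) addv v (P j).

(* MmS_v^{N+1}(M) = max over partitions of min_j v(S_j); the seed is the
   value of trivial_partition, which is itself a partition. *)
Definition MmS (v : M -> int) : int :=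
  \big[Num.max/ minpart v trivial_partition]_(P | is_partition P) minpart v P.

Definition MmS_allocation (v : 'I_N.+1 -> M -> int)
    (A : {ffun 'I_N.+1 -> {set M}}) : Prop :=
  is_partition A /\ forall i, MmS (v i) <= addv (v i) (A i).

End MmS.

Definition Item := ('I_3 * 'I_4)%type.

Definition entry (m : seq (seq int)) (x : Item) : int :=
  nth 0 (nth [::] m x.1) x.2.

Definition Bm : seq (seq int) := [:: [:: 1; 1; 1; 1]; [:: 1; 1; 1; 1]; [:: 1; 1; 1; 1]].
Definition Om : seq (seq int) :=
  [:: [:: 17; 25; 12; 1]; [:: 2; 22; 3; 28]; [:: 11; 0; 21; 23]].
Definition E1 : seq (seq int) := [:: [:: -3; 1; 1; 1]; [:: 0; 0; 0; 0]; [:: 0; 0; 0; 0]].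
Definition E2 : seq (seq int) := [:: [:: -3; 1; 0; 0]; [:: 1; 0; 0; 0]; [:: 1; 0; 0; 0]].
Definition E3 : seq (seq int) := [:: [:: -3; 0; 1; 0]; [:: 0; 0; 1; 0]; [:: 0; 0; 0; 1]].

Definition Em (i : 'I_3) : seq (seq int) :=
  match val i with 0 => E1 | 1 => E2 | _ => E3 end.

Definition u (i : 'I_3) (x : Item) : int :=
  10 ^+ 6 * entry Bm x + 10 ^+ 3 * entry Om x + entry (Em i) x.
Definition w (i : 'I_3) (x : Item) : int :=
  10 ^+ 6 * entry Bm x + 10 ^+ 3 * entry Om x - entry (Em i) x.

(** MmS_v <= v(M)/n, since the minimum of the [n] bundle values is at most
    their average; so a partition into [n] bundles of equal value determines
    the MmS value.  Each agent has a partition of the twelve items into three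
    bundles of four items with O-entries summing to 55 and E^i-entries to 0;
    it is equitable for u_i, w_i and their negatives, so every MmS value is
    4055000 or -4055000.  Handing out the bundles of
    [[2,1,2,0],[1,0,2,1],[0,1,0,2]] gives each agent B- and O-value exactly
    4055000 and a non-negative E^i-value, which suits both I and -J.  For -I
    and J, a search through the 3^12 assignments shows that some agent always
    falls short; a branch is cut as soon as an agent can no longer reach her
    MmS value even with every remaining item she values positively. *)

From Pilot Require Import Defs.
From Stdlib Require Import ZArith.
From HB Require Import structures.
From mathcomp Require Import all_boot all_order all_algebra ssrZ.
Set Implicit Arguments. Unset Strict Implicit. Unset Printing Implicit Defensive.
Import Order.TTheory GRing.Theory Num.Theory.
Local Open Scope ring_scope.

(* [all_algebra] exports another [addv], the sum of vector subspaces. *)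
Local Notation addv := Defs.addv.

Section Partitions.
Variables (M : finType) (N : nat).
Implicit Types (f : M -> 'I_N.+1) (P : {ffun 'I_N.+1 -> {set M}}) (v : M -> int).

Definition partition_of f : {ffun 'I_N.+1 -> {set M}} :=
  [ffun j => [set x | f x == j]].

Lemma partition_ofE f j x : (x \in partition_of f j) = (f x == j).
Proof. by rewrite ffunE inE. Qed.

Lemma is_partition_of f : is_partition (partition_of f).
Proof.
apply/andP; split.
  apply/forallP => i; apply/forallP => j; apply/implyP => neq_ij.
  apply/pred0P => x /=; rewrite !partition_ofE.
  by apply/negbTE; apply: contra neq_ij => /andP[/eqP <- /eqP <-].
apply/eqP/setP => x; rewrite inE; apply/bigcupP.
by exists (f x); rewrite ?partition_ofE.
Qed.

Definition owner P x : 'I_N.+1 := odflt ord0 [pick j | x \in P j].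

Lemma partition_of_owner P : is_partition P -> partition_of (owner P) = P.
Proof.
case/andP => /forallP disjP /eqP coverP.
apply/ffunP => j; apply/setP => x; rewrite partition_ofE /owner.
case: pickP => [k x_k | none] /=; last first.
  have : x \in \bigcup_(j < N.+1) P j by rewrite coverP inE.
  by case/bigcupP => k _; rewrite none.
apply/eqP/idP => [<- // | x_j]; apply/eqP/negPn/negP => neq_kj.
by have /implyP/(_ neq_kj)/pred0P/(_ x) := forallP (disjP k) j; rewrite /= x_k x_j.
Qed.

Lemma addv_partition_of v f j :
  addv v (partition_of f j) = \sum_(x | f x == j) v x.
Proof. by apply: eq_bigl => x; rewrite partition_ofE. Qed.

Lemma sum_addv_partition v P :
  is_partition P -> \sum_j addv v (P j) = addv v setT.
Proof.
move/partition_of_owner <-; rewrite /addv (partition_big (owner P) xpredT) //.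
by apply: eq_bigr => j _; apply: eq_bigl => x; rewrite partition_ofE inE.
Qed.

Lemma minpart_le_addv v P j : minpart v P <= addv v (P j).
Proof. exact: bigmin_le. Qed.

Lemma le_minpart v P m : (forall j, m <= addv v (P j)) -> m <= minpart v P.
Proof. by move=> le_m; apply: le_bigmin. Qed.

Lemma minpart_le_MmS v P : is_partition P -> minpart v P <= MmS N v.
Proof. exact: le_bigmax_cond. Qed.

Lemma is_partition_trivial : is_partition (trivial_partition M N).
Proof.
suff -> : trivial_partition M N = partition_of (fun=> ord0) by exact: is_partition_of.
by apply/ffunP => j; apply/setP => x; rewrite partition_ofE ffunE eq_sym; case: eqP; rewrite inE.
Qed.

Lemma MmS_le v m : (forall P, is_partition P -> minpart v P <= m) -> MmS N v <= m.
Proof. by move=> le_m; apply: bigmax_le; [exact: le_m is_partition_trivial | exact: le_m]. Qed.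

Lemma minpart_mean v P : is_partition P -> minpart v P *+ N.+1 <= addv v setT.
Proof.
move=> partP; rewrite -(sum_addv_partition v partP).
have -> : minpart v P *+ N.+1 = \sum_(j < N.+1) minpart v P by rewrite sumr_const card_ord.
by apply: ler_sum => j _; exact: minpart_le_addv.
Qed.

Lemma MmS_equitable v P m :
  is_partition P -> (forall j, addv v (P j) = m) -> MmS N v = m.
Proof.
move=> partP addvP; apply/eqP; rewrite eq_le; apply/andP; split.
  apply: MmS_le => Q partQ; rewrite -(ler_pMn2r (ltn0Sn N)).
  apply: le_trans (minpart_mean v partQ) _.
  by rewrite -(sum_addv_partition v partP) (eq_bigr _ (fun j _ => addvP j)) sumr_const card_ord.
by apply: le_trans (minpart_le_MmS v partP); apply: le_minpart => j; rewrite addvP.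
Qed.

Lemma MmS_allocationP (v : 'I_N.+1 -> M -> int) :
  (exists A, MmS_allocation v A) <->
  exists f, forall i, MmS N (v i) <= addv (v i) (partition_of f i).
Proof.
split=> [[A [partA fairA]] | [f fair_f]].
  by exists (owner A); rewrite partition_of_owner.
by exists (partition_of f); split; [exact: is_partition_of | ].
Qed.

End Partitions.

(* Unlike [ord_enum], this enumeration evaluates: [insub] matches on the opaque [idP]. *)
Fixpoint ords n : seq 'I_n := if n is n'.+1 then ord0 :: map (lift ord0) (ords n') else [::].

Lemma mem_ords n (i : 'I_n) : i \in ords n.
Proof.
elim: n i => [|n IH] i; first by case: i.
by rewrite inE; case: (unliftP ord0 i) => [j -> | ->]; rewrite ?eqxx // map_f.
Qed.

Lemma ords_allP n (P : pred 'I_n) : reflect (forall i, P i) (all P (ords n)).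
Proof. by apply: (iffP allP) => [P_enum i | P_all i _]; [exact: P_enum (mem_ords i) | ]. Qed.

Lemma size_ords n : size (ords n) = n.
Proof. by elim: n => //= n IH; rewrite size_map IH. Qed.

Lemma nth_ords n (i0 i : 'I_n) : nth i0 (ords n) i = i.
Proof.
elim: n i0 i => [|n IH] i0 i; first by case: i.
by case: (unliftP ord0 i) => [j -> | ->] //=; rewrite add0n (nth_map j) ?IH ?size_ords.
Qed.

Section AssignmentSearch.
Variables (R : realDomainType) (M : Type) (n : nat).
Variables (V : 'I_n -> M -> R) (bound : 'I_n -> R).

Definition tabulate (F : 'I_n -> R) : seq R := map F (ords n).

Lemma nth_tabulate F (i : 'I_n) : nth 0 (tabulate F) i = F i.
Proof. by rewrite (nth_map i) ?nth_ords ?size_ords. Qed.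

Definition max_gain (i : 'I_n) (s : seq M) : R :=
  foldr (fun x r => Num.max (V i x) 0 + r) 0 s.

Lemma sum_le_max_gain i (P : pred M) s : \sum_(x <- s | P x) V i x <= max_gain i s.
Proof.
elim: s => [|x s IH]; first by rewrite big_nil.
rewrite big_cons /=; case: (P x).
  by rewrite lerD // le_max lexx.
by rewrite -[leLHS]add0r lerD // le_max lexx orbT.
Qed.

(* [pot] lists, for each agent, the largest total she can still reach; [row]
   lists the values of the next item for all agents. *)
Definition give (pot row : seq R) (j : 'I_n) : seq R :=
  tabulate (fun k => nth 0 pot k - Num.max (nth 0 row k) 0 + (if k == j then nth 0 row k else 0)).

(* Written with [if] rather than [||] so that call-by-value evaluation prunes. *)
Fixpoint search (rows : seq (seq R)) (pot : seq R) : bool :=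
  if has (fun i : 'I_n => nth 0 pot i < bound i) (ords n) then true
  else if rows is row :: rows' then all (search rows' \o give pot row) (ords n)
  else false.

Definition every_assignment_fails (s : seq M) : bool :=
  search [seq tabulate (V ^~ x) | x <- s] (tabulate (max_gain ^~ s)).

Lemma some_agent_fails s pot (acc : 'I_n -> R) :
  (forall i : 'I_n, nth 0 pot i = acc i + max_gain i s) ->
  has (fun i : 'I_n => nth 0 pot i < bound i) (ords n) ->
  forall f : M -> 'I_n, exists i, acc i + \sum_(x <- s | f x == i) V i x < bound i.
Proof.
move=> pot_acc /hasP[i _ lt_i] f; exists i; apply: le_lt_trans lt_i.
by rewrite pot_acc lerD2l sum_le_max_gain.
Qed.

Lemma searchP s pot (acc : 'I_n -> R) :
  (forall i : 'I_n, nth 0 pot i = acc i + max_gain i s) ->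
  search [seq tabulate (V ^~ x) | x <- s] pot ->
  forall f : M -> 'I_n, exists i, acc i + \sum_(x <- s | f x == i) V i x < bound i.
Proof.
elim: s pot acc => [|x s IH] pot acc pot_acc /=.
  by case: ifP => [/(some_agent_fails pot_acc) // | _ //].
case: ifP => [/(some_agent_fails pot_acc) // | _ /allP /= fails f].
pose acc' k := acc k + (if k == f x then V k x else 0).
have [k|i lt_i] := IH _ acc' _ (fails _ (mem_ords (f x))) f.
  rewrite !nth_tabulate pot_acc /acc' /=.
  by rewrite addrA (addrAC (acc k) (Num.max _ _)) addrK addrAC.
exists i; move: lt_i; rewrite /acc' big_cons eq_sym.
by case: eqP => _; rewrite ?addr0 ?addrA.
Qed.

Lemma every_assignment_failsP s : every_assignment_fails s ->
  forall f : M -> 'I_n, exists i, \sum_(x <- s | f x == i) V i x < bound i.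
Proof.
move=> fails f; have [i|i] := searchP (acc := fun=> 0) _ fails f.
  by rewrite nth_tabulate add0r.
by rewrite add0r; exists i.
Qed.

End AssignmentSearch.

Lemma ltr_Z_of_int (a b : int) : (Z_of_int a < Z_of_int b) = (a < b).
Proof. by rewrite !Instances.Z_of_intE; exact: ltr_int. Qed.

Lemma ler_Z_of_int (a b : int) : (Z_of_int a <= Z_of_int b) = (a <= b).
Proof. by rewrite !Instances.Z_of_intE; exact: ler_int. Qed.

Section ZComputations.
Variables (M : finType) (N : nat) (s : seq M).
Hypothesis s_enum : perm_eq s (index_enum M).

Lemma Z_of_int_addv_partition_of (v : M -> int) (V : M -> Z) (f : M -> 'I_N.+1) j :
  (forall x, Z_of_int (v x) = V x) ->
  Z_of_int (addv v (partition_of f j)) = \sum_(x <- s | f x == j) V x.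
Proof.
move=> vV; rewrite addv_partition_of raddf_sum [RHS](perm_big _ s_enum).
by apply: eq_bigr => x _; exact: vV.
Qed.

Variables (v : 'I_N.+1 -> M -> int) (V : 'I_N.+1 -> M -> Z).
Hypothesis vV : forall i x, Z_of_int (v i x) = V i x.

Lemma MmS_equitable_Z (g : 'I_N.+1 -> M -> 'I_N.+1) (m : Z) :
  all (fun i => all (fun j => \sum_(x <- s | g i x == j) V i x == m) (ords N.+1))
      (ords N.+1) ->
  forall i, Z_of_int (MmS N (v i)) = m.
Proof.
move=> /ords_allP equitable i.
rewrite (@MmS_equitable _ _ _ (partition_of (g i)) (int_of_Z m)) ?int_of_ZK //.
  exact: is_partition_of.
move=> j; apply: (can_inj Z_of_intK).
rewrite int_of_ZK (Z_of_int_addv_partition_of _ _ (vV i)).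
by have /ords_allP/(_ j)/eqP := equitable i.
Qed.

Lemma MmS_allocation_Z (m : 'I_N.+1 -> Z) (f : M -> 'I_N.+1) :
  (forall i, Z_of_int (MmS N (v i)) = m i) ->
  all (fun i => m i <= \sum_(x <- s | f x == i) V i x) (ords N.+1) ->
  exists A, MmS_allocation v A.
Proof.
move=> MmS_v /ords_allP fair_f; apply/MmS_allocationP; exists f => i.
by rewrite -ler_Z_of_int MmS_v (Z_of_int_addv_partition_of _ _ (vV i)) fair_f.
Qed.

Lemma no_MmS_allocation_Z (m : 'I_N.+1 -> Z) :
  (forall i, Z_of_int (MmS N (v i)) = m i) ->
  every_assignment_fails V m s -> ~ exists A, MmS_allocation v A.
Proof.
move=> MmS_v fails /MmS_allocationP[f fair_f].
have [i] := every_assignment_failsP fails f.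
by rewrite -(Z_of_int_addv_partition_of _ _ (vV i)) -MmS_v ltr_Z_of_int ltNge fair_f.
Qed.

End ZComputations.

Definition items : seq Item := [seq (j, k) | j <- ords 3, k <- ords 4].

Lemma perm_items : perm_eq items (index_enum Item).
Proof.
apply: uniq_perm => [// | | [j k]]; first exact: index_enum_uniq.
by rewrite mem_index_enum; apply/allpairsP; exists (j, k); rewrite !mem_ords.
Qed.

Definition entryZ (m : seq (seq int)) (x : Item) : Z := Z_of_int (entry m x).

Definition uZ (i : 'I_3) (x : Item) : Z :=
  1000000 * entryZ Bm x + 1000 * entryZ Om x + entryZ (Em i) x.
Definition wZ (i : 'I_3) (x : Item) : Z :=
  1000000 * entryZ Bm x + 1000 * entryZ Om x - entryZ (Em i) x.

Lemma Z_of_int_u i x : Z_of_int (u i x) = uZ i x.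
Proof. by rewrite /u !rmorphD !rmorphM. Qed.

Lemma Z_of_int_w i x : Z_of_int (w i x) = wZ i x.
Proof. by rewrite /w rmorphB !rmorphD !rmorphM. Qed.

Lemma Z_of_int_opp (I M : Type) (v : I -> M -> int) V :
  (forall i x, Z_of_int (v i x) = V i x) ->
  forall i x, Z_of_int (- v i x) = - V i x.
Proof. by move=> vV i x; rewrite -vV; exact: raddfN. Qed.

(* [assignment a] gives item [(j, k)] to agent [a_jk] (agents numbered from 0). *)
Definition assignment (a : seq (seq nat)) (x : Item) : 'I_3 :=
  nth ord0 (ords 3) (nth 0 (nth [::] a x.1) x.2).

Definition equitable_assignment (i : 'I_3) : Item -> 'I_3 :=
  assignment match val i with
    | 0 => [:: [:: 0; 0; 0; 0]; [:: 1; 1; 1; 1]; [:: 2; 2; 2; 2]]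
    | 1 => [:: [:: 0; 0; 1; 2]; [:: 0; 1; 2; 2]; [:: 0; 1; 1; 2]]
    | _ => [:: [:: 0; 1; 0; 2]; [:: 1; 2; 0; 1]; [:: 2; 1; 2; 0]]
    end.

Definition fair_assignment : Item -> 'I_3 :=
  assignment [:: [:: 2; 1; 2; 0]; [:: 1; 0; 2; 1]; [:: 0; 1; 0; 2]].

Definition share : Z := 4055000.

Lemma MmS_u i : Z_of_int (MmS 2 (u i)) = share.
Proof.
move: i; apply: (MmS_equitable_Z perm_items Z_of_int_u (g := equitable_assignment)).
by rewrite unlock; vm_compute.
Qed.

Lemma MmS_w i : Z_of_int (MmS 2 (w i)) = share.
Proof.
move: i; apply: (MmS_equitable_Z perm_items Z_of_int_w (g := equitable_assignment)).
by rewrite unlock; vm_compute.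
Qed.

Lemma MmS_opp_u i : Z_of_int (MmS 2 (fun x => - u i x)) = - share.
Proof.
move: i; apply: (MmS_equitable_Z perm_items (Z_of_int_opp Z_of_int_u) (g := equitable_assignment)).
by rewrite unlock; vm_compute.
Qed.

Lemma MmS_opp_w i : Z_of_int (MmS 2 (fun x => - w i x)) = - share.
Proof.
move: i; apply: (MmS_equitable_Z perm_items (Z_of_int_opp Z_of_int_w) (g := equitable_assignment)).
by rewrite unlock; vm_compute.
Qed.

Theorem proposition4 :
  (exists A, @MmS_allocation Item 2 u A) /\
  ~ (exists A, @MmS_allocation Item 2 (fun i x => - u i x) A) /\
  ~ (exists A, @MmS_allocation Item 2 w A) /\
  (exists A, @MmS_allocation Item 2 (fun i x => - w i x) A).
Proof.
split; [|split; [|split]].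
- apply: (MmS_allocation_Z perm_items Z_of_int_u (f := fair_assignment) MmS_u).
  by rewrite unlock; vm_compute.
- apply: (no_MmS_allocation_Z perm_items (Z_of_int_opp Z_of_int_u) MmS_opp_u).
  by vm_compute.
- apply: (no_MmS_allocation_Z perm_items Z_of_int_w MmS_w).
  by vm_compute.
- apply: (MmS_allocation_Z perm_items (Z_of_int_opp Z_of_int_w) (f := fair_assignment) MmS_opp_w).
  by rewrite unlock; vm_compute.
Qed.
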